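(* Let $p\in(0,1)$, $\gamma>0$, $B>0$, $w\in\mathbb{N}$. Then $\mathcal{T}_N^*$ is a strictly increasing function of $N\in\mathbb{N}$.
   Context: Logarithms are base 2. For an admissible (nonnegative, with sum at most $B$) sequence $(x_j)_{j\ge1}$, $$\mathcal{T}_\infty(x_1,x_2,\dots)=\sum_{k=1}^{w}p^2(1-p)^{k-1}\frac{k}{2}\log_2\!\Big(1+\gamma\frac{B}{k}\Big)+\sum_{j=1}^{\infty}p(1-p)^{j+w-1}\frac12\log_2(1+\gamma x_j)+\sum_{k=1}^{\infty}p^2(1-p)^{k+w-1}\frac{w}{2}\log_2\!\Big(1+\gamma\frac{B-\sum_{j=1}^{k}x_j}{w}\Big).$$ For $N\in\mathbb{N}$ and $\xi_1,\dots,\xi_N\ge0$ with $\sum_{j=1}^N\xi_j\le B$, define $\mathcal{T}_N(\xi_1,\dots,\xi_N)=\mathcal{T}_\infty(\xi_1,\dots,\xi_N,0,0,\dots)$, and let $\mathcal{T}_N^*$ be the supremum of $\mathcal{T}_N$ over this set. *)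

From Stdlib Require Import Reals.
From Coquelicot Require Import Coquelicot.
Open Scope R_scope.

Definition log2 (x : R) : R := ln x / ln 2.

(* partial sum x_1 + ... + x_k  (sequences are indexed from 1) *)
Definition psum (x : nat -> R) (k : nat) : R := sum_n_m x 1 k.

(* T_infinity(x_1, x_2, ...) ; x is read at indices 1, 2, 3, ... *)
Definition T_inf (p gamma B : R) (w : nat) (x : nat -> R) : R :=
  sum_n_m (fun k => p ^ 2 * (1 - p) ^ (k - 1) * (INR k / 2)
                    * log2 (1 + gamma * (B / INR k))) 1 w
  + Series (fun n => let j := S n in
              p * (1 - p) ^ (j + w - 1) * (1 / 2) * log2 (1 + gamma * x j))
  + Series (fun n => let k := S n in
              p ^ 2 * (1 - p) ^ (k + w - 1) * (INR w / 2)
              * log2 (1 + gamma * ((B - psum x k) / INR w))).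

Definition pad (N : nat) (xi : nat -> R) : nat -> R :=
  fun j => if Nat.leb j N then xi j else 0.

Definition T_N (p gamma B : R) (w N : nat) (xi : nat -> R) : R :=
  T_inf p gamma B w (pad N xi).

Definition feasible (B : R) (N : nat) (xi : nat -> R) : Prop :=
  (forall j, (1 <= j <= N)%nat -> 0 <= xi j) /\ psum xi N <= B.

Definition T_N_star (p gamma B : R) (w N : nat) : Rbar :=
  Lub_Rbar (fun y => exists xi, feasible B N xi /\ y = T_N p gamma B w N xi).

From Stdlib Require Import Reals Lra Lia Classical FunctionalExtensionality.
From Coquelicot Require Import Coquelicot.
Open Scope R_scope.

(* For every feasible point of T_N, supported on 1..N, the series in T_inf
   reduce to finite sums plus a geometric tail, so T_N^* is finite: every
   logarithm is at most log2 (1 + gamma B).  The strict increase comes from a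
   uniform improvement: from any feasible point of T_N one builds a feasible
   point of T_(N+1) whose value is larger by a fixed d > 0.  If at least
   rho = B / 5^N of the budget is unused, a little of it goes to coordinate
   N+1.  Otherwise some coordinate j0 carries at least four times the budget
   left after it, and moving rho from j0 to N+1 loses less at j0 than it gains
   in the residual terms k >= j0, by concavity of the logarithm. *)

Lemma psum_0 (x : nat -> R) : psum x 0 = 0.
Proof. unfold psum. rewrite sum_n_m_zero; [reflexivity | lia]. Qed.

Lemma psum_S (x : nat -> R) (k : nat) : psum x (S k) = psum x k + x (S k).
Proof. unfold psum. rewrite sum_n_Sm; [reflexivity | lia]. Qed.

Lemma psum_ext (x y : nat -> R) (k : nat) :
  (forall j, (1 <= j <= k)%nat -> x j = y j) -> psum x k = psum y k.
Proof. apply sum_n_m_ext_loc. Qed.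

Lemma psum_le (x y : nat -> R) (k : nat) :
  (forall j, (1 <= j <= k)%nat -> x j <= y j) -> psum x k <= psum y k.
Proof.
  induction k as [|k IH]; intros Hxy; rewrite ?psum_0, ?psum_S; [lra |].
  assert (psum x k <= psum y k) by (apply IH; intros; apply Hxy; lia).
  assert (x (S k) <= y (S k)) by (apply Hxy; lia).
  lra.
Qed.

Lemma psum_sub (x y : nat -> R) (k : nat) :
  psum x k - psum y k = psum (fun j => x j - y j) k.
Proof. induction k as [|k IH]; rewrite ?psum_0, ?psum_S; [ring |]. rewrite <- IH. ring. Qed.

Lemma psum_scal_r (c : R) (x : nat -> R) (k : nat) :
  psum (fun j => x j * c) k = psum x k * c.
Proof. induction k as [|k IH]; rewrite ?psum_0, ?psum_S; [ring |]. rewrite IH. ring. Qed.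

Lemma psum_const_0 (k : nat) : psum (fun _ => 0) k = 0.
Proof. induction k as [|k IH]; rewrite ?psum_0, ?psum_S; [reflexivity |]. rewrite IH. ring. Qed.

Lemma psum_telescope (a : nat -> R) (j0 n : nat) : (1 <= j0 <= S n)%nat ->
  psum (fun k => if Nat.leb j0 k then a k - a (S k) else 0) n = a j0 - a (S n).
Proof.
  induction n as [|n IH]; intros Hj.
  - rewrite psum_0. replace j0 with 1%nat by lia. ring.
  - rewrite psum_S. destruct (Nat.eq_dec j0 (S (S n))) as [->|Hne].
    + rewrite (psum_ext _ (fun _ => 0)), psum_const_0.
      * rewrite (proj2 (Nat.leb_gt _ _)) by lia. ring.
      * intros j Hj'. rewrite (proj2 (Nat.leb_gt _ _)) by lia. reflexivity.
    + rewrite IH, (proj2 (Nat.leb_le _ _)) by lia. ring.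
Qed.

Lemma psum_nondecr (x : nat -> R) (L k m : nat) :
  (forall j, (1 <= j <= L)%nat -> 0 <= x j) -> (k <= m <= L)%nat -> psum x k <= psum x m.
Proof.
  intros Hx [Hkm HmL]. induction Hkm as [|m Hkm IH]; [lra |].
  rewrite psum_S. assert (0 <= x (S m)) by (apply Hx; lia).
  assert (psum x k <= psum x m) by (apply IH; lia). lra.
Qed.

Lemma le_psum (x : nat -> R) (L j : nat) :
  (forall j, (1 <= j <= L)%nat -> 0 <= x j) -> (1 <= j <= L)%nat -> x j <= psum x L.
Proof.
  intros Hx Hj. destruct j as [|j]; [lia |].
  assert (psum x (S j) <= psum x L) by (apply (psum_nondecr x L); [exact Hx | lia]).
  assert (0 <= psum x j) by (rewrite <- (psum_0 x); apply (psum_nondecr x L); [exact Hx | lia]).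
  rewrite psum_S in *. lra.
Qed.

Definition upd (x : nat -> R) (i : nat) (v : R) : nat -> R :=
  fun j => if Nat.eqb j i then v else x j.

Lemma upd_eq (x : nat -> R) (i : nat) (v : R) : upd x i v i = v.
Proof. unfold upd. rewrite Nat.eqb_refl. reflexivity. Qed.

Lemma upd_neq (x : nat -> R) (i j : nat) (v : R) : j <> i -> upd x i v j = x j.
Proof. intros Hji. unfold upd. rewrite (proj2 (Nat.eqb_neq _ _) Hji). reflexivity. Qed.

Lemma psum_upd (x : nat -> R) (i : nat) (v : R) (k : nat) : (1 <= i)%nat ->
  psum (upd x i v) k = psum x k + (if Nat.leb i k then v - x i else 0).
Proof.
  intros Hi. induction k as [|k IH].
  - rewrite !psum_0, (proj2 (Nat.leb_gt _ _)) by lia. ring.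
  - rewrite !psum_S, IH. destruct (Nat.eq_dec (S k) i) as [<-|Hne].
    + rewrite upd_eq, Nat.leb_refl, (proj2 (Nat.leb_gt _ _)) by lia. ring.
    + rewrite upd_neq by exact Hne.
      destruct (Nat.leb i k) eqn:E; [apply Nat.leb_le in E | apply Nat.leb_gt in E];
        [rewrite (proj2 (Nat.leb_le i (S k))) by lia
        |rewrite (proj2 (Nat.leb_gt i (S k))) by lia]; ring.
Qed.

Definition transfer (x : nat -> R) (j i : nat) (v : R) : nat -> R :=
  upd (upd x i (x i + v)) j (x j - v).

Lemma psum_transfer (x : nat -> R) (j i : nat) (v : R) (k : nat) :
  (1 <= j)%nat -> (1 <= i)%nat -> i <> j ->
  psum (transfer x j i v) k
  = psum x k + (if Nat.leb i k then v else 0) - (if Nat.leb j k then v else 0).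
Proof.
  intros Hj Hi Hij. unfold transfer.
  rewrite psum_upd, psum_upd, upd_neq by (auto; lia).
  destruct (Nat.leb i k), (Nat.leb j k); ring.
Qed.

Lemma transfer_src (x : nat -> R) (j i : nat) (v : R) : transfer x j i v j = x j - v.
Proof. apply upd_eq. Qed.

Lemma transfer_dst (x : nat -> R) (j i : nat) (v : R) : i <> j -> transfer x j i v i = x i + v.
Proof. intros Hij. unfold transfer. rewrite upd_neq by exact Hij. apply upd_eq. Qed.

Lemma transfer_other (x : nat -> R) (j i k : nat) (v : R) :
  k <> j -> k <> i -> transfer x j i v k = x k.
Proof. intros Hj Hi. unfold transfer. rewrite !upd_neq by assumption. reflexivity. Qed.

Definition supported (L : nat) (x : nat -> R) : Prop := forall j, (L < j)%nat -> x j = 0.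

Lemma psum_supported (x : nat -> R) (L k : nat) :
  supported L x -> (L <= k)%nat -> psum x k = psum x L.
Proof.
  intros Hx Hk. induction Hk as [|k Hk IH]; [reflexivity |].
  rewrite psum_S, IH, Hx by lia. ring.
Qed.

Lemma supported_pad (N : nat) (xi : nat -> R) : supported N (pad N xi).
Proof. intros j Hj. unfold pad. rewrite (proj2 (Nat.leb_gt _ _)) by lia. reflexivity. Qed.

Lemma pad_le (N j : nat) (xi : nat -> R) : (j <= N)%nat -> pad N xi j = xi j.
Proof. intros Hj. unfold pad. rewrite (proj2 (Nat.leb_le _ _)) by lia. reflexivity. Qed.

Lemma pad_supported (L M : nat) (x : nat -> R) :
  (L <= M)%nat -> supported L x -> pad M x = x.
Proof.
  intros HLM Hx. apply functional_extensionality. intros j. unfold pad.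
  destruct (Nat.leb j M) eqn:E; [reflexivity |].
  apply Nat.leb_gt in E. symmetry. apply Hx. lia.
Qed.

Lemma feasible_pad (B : R) (N : nat) (xi : nat -> R) :
  feasible B N xi -> feasible B N (pad N xi).
Proof.
  intros [Hxi Hs]. split.
  - intros j Hj. rewrite pad_le by lia. apply Hxi. exact Hj.
  - rewrite (psum_ext _ xi); [exact Hs |]. intros j Hj. apply pad_le. lia.
Qed.

Lemma feasible_supported (B : R) (L M : nat) (x : nat -> R) :
  (L <= M)%nat -> supported L x -> feasible B L x -> feasible B M x.
Proof.
  intros HLM Hx [Hnn Hs]. split.
  - intros j Hj. destruct (Nat.le_gt_cases j L); [apply Hnn; lia |].
    rewrite Hx by lia. lra.
  - rewrite (psum_supported x L M Hx HLM). exact Hs.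
Qed.

Lemma exists_crossing (P : nat -> Prop) (N : nat) :
  P 0%nat -> ~ P N -> exists n, (n < N)%nat /\ P n /\ ~ P (S n).
Proof.
  induction N as [|N IH]; intros H0 HN; [contradiction |].
  destruct (classic (P N)) as [HP|HP].
  - exists N. auto.
  - destruct (IH H0 HP) as [n [Hn Hn']]. exists n. split; [lia | exact Hn'].
Qed.

Lemma sum_n_psum (a : nat -> R) (L : nat) :
  (0 < L)%nat -> sum_n (fun n => a (S n)) (pred L) = psum a L.
Proof. intros HL. unfold sum_n, psum. rewrite sum_n_m_S. f_equal. lia. Qed.

Lemma Series_eventually_geom (a : nat -> R) (L : nat) (c q : R) :
  (0 < L)%nat -> Rabs q < 1 -> (forall n, a (L + n)%nat = c * q ^ n) ->
  Series a = sum_n a (pred L) + c / (1 - q).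
Proof.
  intros HL Hq Ha. apply is_series_unique, (is_series_decr_n _ L); [exact HL |].
  apply (is_series_ext _ _ _ (fun n => eq_sym (Ha n))).
  assert (E : forall s : R, plus (s + c / (1 - q)) (opp s) = scal c (/ (1 - q))).
  { intros s. unfold scal, plus, opp; simpl; unfold mult; simpl. unfold Rdiv. ring. }
  rewrite E. exact (is_series_scal_l c _ _ (is_series_geom q Hq)).
Qed.

Lemma Lub_Rbar_lt (E F : R -> Prop) (d U y0 : R) :
  0 < d -> F y0 -> (forall y, F y -> y <= U) ->
  (forall x, E x -> exists y, F y /\ x + d <= y) ->
  Rbar_lt (Lub_Rbar E) (Lub_Rbar F).
Proof.
  intros Hd Hy0 HU Himp.
  destruct (Lub_Rbar_correct F) as [Fub Fleast].
  assert (Hlo : Rbar_le y0 (Lub_Rbar F)) by (apply Fub, Hy0).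
  assert (Hhi : Rbar_le (Lub_Rbar F) U) by (apply Fleast; intros y Hy; apply HU, Hy).
  destruct (Lub_Rbar F) as [m| |]; simpl in Hlo, Hhi; try contradiction.
  apply Rbar_le_lt_trans with (m - d); [| simpl; lra].
  apply (proj2 (Lub_Rbar_correct E)). intros x Hx.
  destruct (Himp x Hx) as [y [Hy Hxy]].
  assert (Rbar_le y m) by (apply Fub, Hy). simpl in *. lra.
Qed.

Lemma ln_le_sub_1 (y : R) : 0 < y -> ln y <= y - 1.
Proof.
  intros Hy. rewrite <- (ln_exp (y - 1)). apply ln_le; [exact Hy |].
  generalize (exp_ineq1_le (y - 1)). lra.
Qed.

Lemma ln2_pos : 0 < ln 2.
Proof. generalize ln_lt_2. lra. Qed.

Lemma log2_sub_le (u v : R) : 0 < u -> 0 < v -> log2 v - log2 u <= (v - u) / u / ln 2.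
Proof.
  intros Hu Hv. unfold log2.
  assert (H := ln_le_sub_1 (v / u) ltac:(apply Rdiv_lt_0_compat; lra)).
  rewrite ln_div in H by lra.
  replace (ln v / ln 2 - ln u / ln 2) with ((ln v - ln u) / ln 2)
    by (field; apply Rgt_not_eq, ln2_pos).
  apply Rmult_le_compat_r; [apply Rlt_le, Rinv_0_lt_compat, ln2_pos |].
  replace ((v - u) / u) with (v / u - 1) by (field; lra). exact H.
Qed.

Lemma log2_sub_ge (u v : R) : 0 < u -> 0 < v -> (v - u) / v / ln 2 <= log2 v - log2 u.
Proof.
  intros Hu Hv. assert (H := log2_sub_le v u Hv Hu). assert (Hl := ln2_pos).
  replace ((v - u) / v / ln 2) with (- ((u - v) / v / ln 2)) by (field; split; lra).
  lra.
Qed.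

Section Throughput.

Variables (p gamma B : R) (w : nat).
Hypotheses (Hp : 0 < p < 1) (Hgamma : 0 < gamma) (HB : 0 < B) (Hw : (1 <= w)%nat).

Definition cap (y : R) : R := log2 (1 + gamma * y).

(* the derivative of [cap] at [c] *)
Definition slope (c : R) : R := gamma / (1 + gamma * c) / ln 2.

Definition coefA (j : nat) : R := p * (1 - p) ^ (j + w - 1) * (1 / 2).

Definition coefB (k : nat) : R := p ^ 2 * (1 - p) ^ (k + w - 1) * (INR w / 2).

Definition T_head : R :=
  sum_n_m (fun k => p ^ 2 * (1 - p) ^ (k - 1) * (INR k / 2)
                    * log2 (1 + gamma * (B / INR k))) 1 w.

(* For [x] supported on 1..L, the residual terms with k > L all equal the one
   at L, and their coefficients sum to [INR w * coefA (S L)]. *)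
Definition T_body (L : nat) (x : nat -> R) : R :=
  psum (fun j => coefA j * cap (x j)) L
  + psum (fun k => coefB k * cap ((B - psum x k) / INR w)) L
  + INR w * coefA (S L) * cap ((B - psum x L) / INR w).

Lemma INR_w_ge_1 : 1 <= INR w.
Proof. apply (le_INR 1 w) in Hw. exact Hw. Qed.

Lemma coefA_S (j : nat) : coefA (S j) = (1 - p) * coefA j.
Proof.
  unfold coefA. replace (S j + w - 1)%nat with (S (j + w - 1)) by lia. simpl. ring.
Qed.

Lemma coefA_add (j n : nat) : coefA (j + n) = (1 - p) ^ n * coefA j.
Proof.
  induction n as [|n IH]; [rewrite Nat.add_0_r; ring |].
  rewrite Nat.add_succ_r, coefA_S, IH. simpl. ring.
Qed.

Lemma coefA_pos (j : nat) : 0 < coefA j.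
Proof. unfold coefA. assert (0 < (1 - p) ^ (j + w - 1)) by (apply pow_lt; lra). nra. Qed.

Lemma coefA_antitone (j N : nat) : (j <= N)%nat -> coefA N <= coefA j.
Proof.
  induction 1 as [|N _ IH]; [lra |].
  rewrite coefA_S. assert (0 < coefA N) by apply coefA_pos. nra.
Qed.

Lemma coefA_gap (j N : nat) : (j <= N)%nat -> p * coefA N <= coefA j - coefA (S N).
Proof.
  intros HjN. assert (H := coefA_antitone j N HjN). rewrite coefA_S. lra.
Qed.

Lemma coefB_eq (k : nat) : coefB k = INR w * (coefA k - coefA (S k)).
Proof.
  rewrite coefA_S. unfold coefB, coefA. field.
Qed.

Lemma coefB_add (k n : nat) : coefB (k + n) = (1 - p) ^ n * coefB k.
Proof. rewrite !coefB_eq, <- Nat.add_succ_l, !coefA_add. ring. Qed.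

Lemma coefB_nonneg (k : nat) : 0 <= coefB k.
Proof.
  rewrite coefB_eq. apply Rmult_le_pos; [apply pos_INR |].
  generalize (coefA_gap k k (le_n k)) (coefA_pos k). nra.
Qed.

Lemma T_inf_closed_form (L : nat) (x : nat -> R) : (1 <= L)%nat -> supported L x ->
  T_inf p gamma B w x = T_head + T_body L x.
Proof.
  intros HL Hx. assert (Hq : Rabs (1 - p) < 1) by (rewrite Rabs_pos_eq; lra).
  unfold T_inf, T_body, T_head.
  rewrite (Series_eventually_geom _ L 0 (1 - p) ltac:(lia) Hq).
  2: { intros n. cbv zeta. rewrite Hx by lia. rewrite Rmult_0_r, Rplus_0_r.
       unfold log2. rewrite ln_1. unfold Rdiv. ring. }
  rewrite (Series_eventually_geom _ L (coefB (S L) * cap ((B - psum x L) / INR w)) (1 - p)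
             ltac:(lia) Hq).
  2: { intros n. cbv zeta. rewrite (psum_supported x L) by (auto; lia).
       change (coefB (S (L + n)) * cap ((B - psum x L) / INR w)
               = coefB (S L) * cap ((B - psum x L) / INR w) * (1 - p) ^ n).
       rewrite <- Nat.add_succ_l, coefB_add. ring. }
  rewrite (sum_n_psum (fun j => coefA j * cap (x j))),
    (sum_n_psum (fun k => coefB k * cap ((B - psum x k) / INR w))) by lia.
  rewrite coefB_eq, (coefA_S (S L)). field. lra.
Qed.

Lemma cap_0 : cap 0 = 0.
Proof. unfold cap, log2. rewrite Rmult_0_r, Rplus_0_r, ln_1. unfold Rdiv. ring. Qed.

Lemma cap_le (a b : R) : 0 <= a <= b -> cap a <= cap b.
Proof.
  intros Hab. unfold cap, log2. apply Rmult_le_compat_r.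
  - apply Rlt_le, Rinv_0_lt_compat, ln2_pos.
  - apply ln_le; nra.
Qed.

Lemma slope_pos (c : R) : 0 <= c -> 0 < slope c.
Proof.
  intros Hc. unfold slope. apply Rdiv_lt_0_compat; [| apply ln2_pos].
  apply Rdiv_lt_0_compat; nra.
Qed.

Lemma slope_sub (c1 c2 : R) : 0 <= c1 -> 0 <= c2 ->
  slope c1 - slope c2 = ln 2 * (c2 - c1) * slope c1 * slope c2.
Proof.
  intros H1 H2. assert (Hl := ln2_pos). unfold slope. field. repeat split; nra.
Qed.

Lemma slope_antitone (c1 c2 : R) : 0 <= c1 <= c2 -> slope c2 <= slope c1.
Proof.
  intros Hc. assert (H := slope_sub c1 c2 ltac:(lra) ltac:(lra)).
  assert (0 < slope c1) by (apply slope_pos; lra).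
  assert (0 < slope c2) by (apply slope_pos; lra).
  assert (0 <= ln 2 * (c2 - c1)) by (generalize ln2_pos; nra).
  assert (0 <= ln 2 * (c2 - c1) * slope c1 * slope c2)
    by (apply Rmult_le_pos; [apply Rmult_le_pos |]; lra).
  lra.
Qed.

Lemma cap_sub_ge (a b c : R) : 0 <= a <= b -> b <= c -> slope c * (b - a) <= cap b - cap a.
Proof.
  intros Hab Hbc. unfold cap.
  assert (H := log2_sub_ge (1 + gamma * a) (1 + gamma * b) ltac:(nra) ltac:(nra)).
  assert (slope c * (b - a) <= (1 + gamma * b - (1 + gamma * a)) / (1 + gamma * b) / ln 2);
    [| lra].
  replace ((1 + gamma * b - (1 + gamma * a)) / (1 + gamma * b) / ln 2)
    with (slope b * (b - a)) 
    by (unfold slope; field; split; apply Rgt_not_eq; first [apply ln2_pos | nra]).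
  apply Rmult_le_compat_r; [lra |]. apply slope_antitone. lra.
Qed.

Lemma cap_sub_le (a b c : R) : 0 <= c <= a -> a <= b -> cap b - cap a <= slope c * (b - a).
Proof.
  intros Hca Hab. unfold cap.
  assert (H := log2_sub_le (1 + gamma * a) (1 + gamma * b) ltac:(nra) ltac:(nra)).
  assert ((1 + gamma * b - (1 + gamma * a)) / (1 + gamma * a) / ln 2 <= slope c * (b - a));
    [| lra].
  replace ((1 + gamma * b - (1 + gamma * a)) / (1 + gamma * a) / ln 2)
    with (slope a * (b - a)) 
    by (unfold slope; field; split; apply Rgt_not_eq; first [apply ln2_pos | nra]).
  apply Rmult_le_compat_r; [lra |]. apply slope_antitone. lra.
Qed.

Lemma feasible_psum_bounds (L k : nat) (x : nat -> R) :
  feasible B L x -> (k <= L)%nat -> 0 <= psum x k <= B.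
Proof.
  intros [Hx Hs] Hk. split.
  - rewrite <- (psum_0 x). apply (psum_nondecr x L); [exact Hx | lia].
  - assert (psum x k <= psum x L) by (apply (psum_nondecr x L); [exact Hx | lia]). lra.
Qed.

Lemma div_w_le (y : R) : 0 <= y -> 0 <= y / INR w <= y.
Proof.
  intros Hy. assert (H1 := INR_w_ge_1). split.
  - apply Rdiv_le_0_compat; lra.
  - apply (Rmult_le_reg_r (INR w)); [lra |].
    unfold Rdiv. rewrite Rmult_assoc, Rinv_l by lra. nra.
Qed.

Lemma T_body_le (L : nat) (x : nat -> R) : feasible B L x ->
  T_body L x <= (psum coefA L + psum coefB L + INR w * coefA (S L)) * cap B.
Proof.
  intros Hf. unfold T_body.
  assert (Hres : forall k, (k <= L)%nat -> cap ((B - psum x k) / INR w) <= cap B).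
  { intros k Hk. apply cap_le. assert (H := feasible_psum_bounds L k x Hf Hk).
    assert (H' := div_w_le (B - psum x k) ltac:(lra)). lra. }
  rewrite !Rmult_plus_distr_r, <- !psum_scal_r.
  repeat apply Rplus_le_compat; try apply psum_le; intros.
  - apply Rmult_le_compat_l; [apply Rlt_le, coefA_pos |].
    apply cap_le. split; [apply (proj1 Hf); lia |].
    assert (x j <= psum x L) by (apply le_psum; [apply (proj1 Hf) | lia]).
    destruct Hf. lra.
  - apply Rmult_le_compat_l; [apply coefB_nonneg | apply Hres; lia].
  - apply Rmult_le_compat_l; [| apply Hres; lia].
    apply Rmult_le_pos; [apply pos_INR | apply Rlt_le, coefA_pos].
Qed.

Lemma T_body_S (N : nat) (y : nat -> R) : T_body (S N) y =
  psum (fun j => coefA j * cap (y j)) N + coefA (S N) * cap (y (S N))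
  + psum (fun k => coefB k * cap ((B - psum y k) / INR w)) N
  + INR w * coefA (S N) * cap ((B - psum y (S N)) / INR w).
Proof. unfold T_body. rewrite !psum_S, (coefB_eq (S N)). ring. Qed.

Definition fill (rho : R) : R := rho / (INR w + 2).

Definition fill_gain (N : nat) (rho : R) : R :=
  coefA (S N) * fill rho * (slope (fill rho) - slope ((rho - fill rho) / INR w)).

Lemma fill_bounds (rho : R) :
  0 < rho -> 0 < fill rho < rho /\ fill rho < (rho - fill rho) / INR w.
Proof.
  intros Hr. assert (H1 := INR_w_ge_1). unfold fill. split; [split |].
  - apply Rdiv_lt_0_compat; lra.
  - apply (Rmult_lt_reg_r (INR w + 2)); [lra |].
    unfold Rdiv. rewrite Rmult_assoc, Rinv_l by lra. nra.
  - apply (Rmult_lt_reg_r (INR w * (INR w + 2))); [nra |].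
    replace ((rho - rho / (INR w + 2)) / INR w * (INR w * (INR w + 2)))
      with (rho * (INR w + 1)) by (field; lra).
    replace (rho / (INR w + 2) * (INR w * (INR w + 2))) with (rho * INR w) by (field; lra).
    lra.
Qed.

Lemma fill_gain_pos (N : nat) (rho : R) : 0 < rho -> 0 < fill_gain N rho.
Proof.
  intros Hr. destruct (fill_bounds rho Hr) as [[H0 _] H1]. unfold fill_gain.
  rewrite slope_sub by lra.
  assert (Hl := ln2_pos). assert (Hc := coefA_pos (S N)).
  assert (Hs0 := slope_pos (fill rho) ltac:(lra)).
  assert (Hs1 := slope_pos ((rho - fill rho) / INR w) ltac:(lra)).
  apply Rmult_lt_0_compat; [apply Rmult_lt_0_compat; lra |].
  apply Rmult_lt_0_compat; [apply Rmult_lt_0_compat; [apply Rmult_lt_0_compat |] |]; lra.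
Qed.

(* The new coordinate earns at rate at least [slope (fill rho)], while the
   residual term, whose argument stays above [(rho - fill rho) / w], loses at
   rate at most [slope ((rho - fill rho) / w)], which is smaller. *)
Lemma T_body_fill (N : nat) (x : nat -> R) (rho : R) :
  supported N x -> 0 < rho -> rho <= B - psum x N ->
  T_body (S N) x + fill_gain N rho <= T_body (S N) (upd x (S N) (fill rho)).
Proof.
  intros Hx Hr Hres. set (e := fill rho). set (r := B - psum x N) in *.
  destruct (fill_bounds rho Hr) as [[He _] Hlt]. fold e in He, Hlt.
  assert (H1 := INR_w_ge_1).
  assert (Hpre : forall k, (k <= N)%nat -> psum (upd x (S N) e) k = psum x k).
  { intros k Hk. rewrite psum_upd, (proj2 (Nat.leb_gt _ _)) by lia. ring. }
  assert (Hlast : psum (upd x (S N) e) (S N) = psum x N + e).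
  { rewrite psum_upd, Nat.leb_refl, psum_S, Hx by lia. ring. }
  rewrite !T_body_S, Hlast, upd_eq, Hx, cap_0, (psum_supported x N (S N) Hx) by lia.
  rewrite (psum_ext (fun j => coefA j * cap (upd x (S N) e j)) (fun j => coefA j * cap (x j)))
    by (intros j Hj; rewrite upd_neq by lia; reflexivity).
  rewrite (psum_ext (fun k => coefB k * cap ((B - psum (upd x (S N) e) k) / INR w))
             (fun k => coefB k * cap ((B - psum x k) / INR w)))
    by (intros k Hk; rewrite Hpre by lia; reflexivity).
  assert (Hgain : coefA (S N) * (slope e * (e - 0)) <= coefA (S N) * (cap e - cap 0)).
  { apply Rmult_le_compat_l; [apply Rlt_le, coefA_pos | apply cap_sub_ge; lra]. }
  assert (Hloss : cap (r / INR w) - cap ((r - e) / INR w)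
                  <= slope ((rho - e) / INR w) * (r / INR w - (r - e) / INR w)).
  { apply cap_sub_le.
    - split; [lra |]. unfold Rdiv. apply Rmult_le_compat_r; [| lra].
      apply Rlt_le, Rinv_0_lt_compat. lra.
    - unfold Rdiv. apply Rmult_le_compat_r; [apply Rlt_le, Rinv_0_lt_compat |]; lra. }
  replace (r / INR w - (r - e) / INR w) with (e / INR w) in Hloss by (field; lra).
  apply (Rmult_le_compat_l (INR w * coefA (S N))) in Hloss;
    [| apply Rmult_le_pos; [lra | apply Rlt_le, coefA_pos]].
  replace (INR w * coefA (S N) * (slope ((rho - e) / INR w) * (e / INR w)))
    with (coefA (S N) * e * slope ((rho - e) / INR w)) in Hloss by (field; lra).
  rewrite cap_0 in Hgain.
  replace (B - (psum x N + e)) with (r - e) by (unfold r; ring).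
  unfold fill_gain. fold e. fold r. lra.
Qed.

Definition transfer_gain (N : nat) (rho : R) : R :=
  rho * (p * coefA N) * (ln 2 * rho * slope B ^ 2).

Lemma transfer_gain_pos (N : nat) (rho : R) : 0 < rho -> 0 < transfer_gain N rho.
Proof.
  intros Hr. unfold transfer_gain. assert (Hl := ln2_pos). assert (Hc := coefA_pos N).
  assert (Hs := slope_pos B ltac:(lra)).
  apply Rmult_lt_0_compat; [apply Rmult_lt_0_compat; [lra | nra] |].
  apply Rmult_lt_0_compat; [nra | apply pow_lt; lra].
Qed.

Lemma slope_gap (t rho : R) : 0 < rho -> 4 * rho <= t <= B ->
  ln 2 * rho * slope B ^ 2 <= slope (t / 4 + rho) - slope (t - rho).
Proof.
  intros Hr Ht. assert (Hl := ln2_pos). rewrite slope_sub by lra.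
  assert (HB0 := slope_pos B ltac:(lra)).
  assert (H1 := slope_antitone (t / 4 + rho) B ltac:(lra)).
  assert (H2 := slope_antitone (t - rho) B ltac:(lra)).
  simpl. rewrite Rmult_1_r, <- Rmult_assoc.
  apply Rmult_le_compat; [| lra | | lra].
  - apply Rmult_le_pos; [apply Rmult_le_pos |]; lra.
  - apply Rmult_le_compat; [apply Rmult_le_pos; lra | lra | apply Rmult_le_compat_l; lra | lra].
Qed.

Lemma residual_gain (N j0 : nat) (x y : nat -> R) (rho : R) :
  feasible B N x -> (1 <= j0 <= N)%nat -> 0 < rho -> B - psum x j0 <= x j0 / 4 ->
  (forall k, (k <= N)%nat -> psum y k = psum x k - (if Nat.leb j0 k then rho else 0)) ->
  (coefA j0 - coefA (S N)) * (rho * slope (x j0 / 4 + rho))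
  <= psum (fun k => coefB k * cap ((B - psum y k) / INR w)) N
     - psum (fun k => coefB k * cap ((B - psum x k) / INR w)) N.
Proof.
  intros Hf Hj0 Hr Hu Hy. set (s := slope (x j0 / 4 + rho)).
  assert (H1 := INR_w_ge_1).
  replace ((coefA j0 - coefA (S N)) * (rho * s))
    with (coefA j0 * (rho * s) - coefA (S N) * (rho * s)) by ring.
  rewrite <- (psum_telescope (fun k => coefA k * (rho * s))) by lia.
  rewrite psum_sub. apply psum_le. intros k Hk. rewrite Hy by lia.
  destruct (Nat.leb j0 k) eqn:Hjk; [apply Nat.leb_le in Hjk | rewrite Rminus_0_r; lra].
  set (u := B - psum x k).
  assert (Hu0 : 0 <= u) by (generalize (feasible_psum_bounds N k x Hf ltac:(lia)); unfold u; lra).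
  assert (Hjk' : u <= B - psum x j0)
    by (unfold u; generalize (psum_nondecr x N j0 k (proj1 Hf) ltac:(lia)); lra).
  replace (B - (psum x k - rho)) with (u + rho) by (unfold u; ring).
  assert (Hcap : slope (x j0 / 4 + rho) * ((u + rho) / INR w - u / INR w)
                 <= cap ((u + rho) / INR w) - cap (u / INR w)).
  { apply cap_sub_ge.
    - split; [apply div_w_le; lra |]. unfold Rdiv.
      apply Rmult_le_compat_r; [apply Rlt_le, Rinv_0_lt_compat |]; lra.
    - generalize (div_w_le (u + rho) ltac:(lra)). lra. }
  fold s in Hcap.
  replace ((u + rho) / INR w - u / INR w) with (rho / INR w) in Hcap by (field; lra).
  apply (Rmult_le_compat_l (coefB k)) in Hcap; [| apply coefB_nonneg].
  rewrite coefB_eq in Hcap |- *.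
  replace (INR w * (coefA k - coefA (S k)) * (s * (rho / INR w)))
    with (coefA k * (rho * s) - coefA (S k) * (rho * s)) in Hcap by (field; lra).
  lra.
Qed.

(* Case of an almost exhausted budget: moving [rho] from a heavy coordinate
   [j0] to the new one loses at most [slope (x j0 - rho)] per unit there, but
   every residual term from [j0] on gains at least [slope (x j0 / 4 + rho)]. *)
Lemma T_body_transfer (N j0 : nat) (x : nat -> R) (rho : R) :
  feasible B N x -> supported N x -> (1 <= j0 <= N)%nat -> 0 < rho ->
  4 * rho <= x j0 -> B - psum x j0 <= x j0 / 4 ->
  T_body (S N) x + transfer_gain N rho <= T_body (S N) (transfer x j0 (S N) rho).
Proof.
  intros Hf Hx Hj0 Hr Ht Hu. set (t := x j0) in *. set (y := transfer x j0 (S N) rho).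
  assert (HtB : t <= B).
  { destruct Hf as [Hnn Hs]. generalize (le_psum x N j0 Hnn Hj0). fold t. lra. }
  assert (Hpre : forall k, (k <= N)%nat -> psum y k = psum x k - (if Nat.leb j0 k then rho else 0)).
  { intros k Hk. unfold y. rewrite psum_transfer, (proj2 (Nat.leb_gt (S N) k)) by lia. ring. }
  assert (Hlast : psum y (S N) = psum x (S N)).
  { unfold y. rewrite psum_transfer, Nat.leb_refl, (proj2 (Nat.leb_le j0 (S N))) by lia. ring. }
  assert (Hnew : y (S N) = rho) by (unfold y; rewrite transfer_dst, Hx by lia; ring).
  assert (Hold : psum (fun j => coefA j * cap (y j)) N
                 = psum (fun j => coefA j * cap (x j)) N + coefA j0 * (cap (t - rho) - cap t)).
  { rewrite (psum_ext _ (upd (fun j => coefA j * cap (x j)) j0 (coefA j0 * cap (t - rho)))).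
    - rewrite psum_upd, (proj2 (Nat.leb_le j0 N)) by lia. fold t. ring.
    - intros j Hj. destruct (Nat.eq_dec j j0) as [->|Hne].
      + rewrite upd_eq. unfold y. rewrite transfer_src. reflexivity.
      + rewrite upd_neq by exact Hne. unfold y. rewrite transfer_other by lia. reflexivity. }
  rewrite !T_body_S, Hlast, Hnew, Hold, Hx, cap_0 by lia.
  assert (Hres := residual_gain N j0 x y rho Hf Hj0 Hr Hu Hpre). fold t in Hres.
  assert (Hloss : coefA j0 * (cap t - cap (t - rho)) <= coefA j0 * (slope (t - rho) * rho)).
  { apply Rmult_le_compat_l; [apply Rlt_le, coefA_pos |].
    replace rho with (t - (t - rho)) at 3 by ring. apply cap_sub_le; lra. }
  assert (Hgain : coefA (S N) * (slope (t - rho) * rho) <= coefA (S N) * cap rho).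
  { apply Rmult_le_compat_l; [apply Rlt_le, coefA_pos |].
    generalize (cap_sub_ge 0 rho (t - rho) ltac:(lra) ltac:(lra)).
    rewrite cap_0, !Rminus_0_r. lra. }
  assert (Hgap : p * coefA N * (ln 2 * rho * slope B ^ 2)
                 <= (coefA j0 - coefA (S N)) * (slope (t / 4 + rho) - slope (t - rho))).
  { apply Rmult_le_compat.
    - generalize (coefA_pos N). nra.
    - apply Rmult_le_pos; [generalize ln2_pos; nra | apply pow2_ge_0].
    - apply coefA_gap. lia.
    - apply slope_gap; lra. }
  apply (Rmult_le_compat_l rho) in Hgap; [| lra].
  unfold transfer_gain. nra.
Qed.

Lemma feasible_extend (N : nat) (x : nat -> R) (v : R) :
  supported N x -> feasible B N x -> 0 <= v <= B - psum x N ->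
  supported (S N) (upd x (S N) v) /\ feasible B (S N) (upd x (S N) v).
Proof.
  intros Hx [Hnn Hs] Hv. split; [| split].
  - intros j Hj. rewrite upd_neq by lia. apply Hx. lia.
  - intros j Hj. destruct (Nat.eq_dec j (S N)) as [->|Hne].
    + rewrite upd_eq. lra.
    + rewrite upd_neq by exact Hne. apply Hnn. lia.
  - rewrite psum_upd, Nat.leb_refl, psum_S, Hx by lia. lra.
Qed.

Lemma feasible_transfer (N j0 : nat) (x : nat -> R) (rho : R) :
  supported N x -> feasible B N x -> (1 <= j0 <= N)%nat -> 0 <= rho <= x j0 ->
  supported (S N) (transfer x j0 (S N) rho) /\ feasible B (S N) (transfer x j0 (S N) rho).
Proof.
  intros Hx [Hnn Hs] Hj0 Hr. split; [| split].
  - intros j Hj. rewrite transfer_other by lia. apply Hx. lia.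
  - intros j Hj. destruct (Nat.eq_dec j j0) as [->|Hne].
    + rewrite transfer_src. lra.
    + destruct (Nat.eq_dec j (S N)) as [->|Hne'].
      * rewrite transfer_dst, Hx by lia. lra.
      * rewrite transfer_other by assumption. apply Hnn. lia.
  - rewrite psum_transfer, Nat.leb_refl, (proj2 (Nat.leb_le j0 (S N))), psum_S, Hx by lia.
    lra.
Qed.

(* The scales [B / 5 ^ n] are chosen so that, if the residual budget drops below
   [B / 5 ^ N], it crosses some scale at a coordinate that carries most of it. *)
Lemma exists_heavy_entry (N : nat) (x : nat -> R) :
  feasible B N x -> B - psum x N < B / 5 ^ N ->
  exists j0, (1 <= j0 <= N)%nat /\ 4 * (B / 5 ^ N) <= x j0 /\ B - psum x j0 <= x j0 / 4.
Proof.
  intros Hf Hlow.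
  destruct (exists_crossing (fun n => B / 5 ^ n <= B - psum x n) N) as [n [Hn [Hin Hout]]].
  - rewrite psum_0. simpl. lra.
  - lra.
  - apply Rnot_le_lt in Hout. exists (S n).
    assert (Hx : x (S n) = (B - psum x n) - (B - psum x (S n))) by (rewrite psum_S; ring).
    assert (H5 : B / 5 ^ S n = B / 5 ^ n / 5) by (simpl; field; apply pow_nonzero; lra).
    assert (HN : B / 5 ^ N <= B / 5 ^ S n).
    { apply Rmult_le_compat_l; [lra |]. apply Rinv_le_contravar; [apply pow_lt; lra |].
      apply Rle_pow; [lra | lia]. }
    rewrite H5 in Hout, HN. repeat split; [lia | lia | lra | lra].
Qed.

Definition step_gain (N : nat) : R :=
  Rmin (fill_gain N (B / 5 ^ N)) (transfer_gain N (B / 5 ^ N)).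

Lemma step_gain_pos (N : nat) : 0 < step_gain N.
Proof.
  assert (Hr : 0 < B / 5 ^ N) by (apply Rdiv_lt_0_compat; [lra | apply pow_lt; lra]).
  apply Rmin_glb_lt; [apply fill_gain_pos | apply transfer_gain_pos]; exact Hr.
Qed.

Lemma T_body_improve (N : nat) (x : nat -> R) : supported N x -> feasible B N x ->
  exists y, supported (S N) y /\ feasible B (S N) y /\
    T_body (S N) x + step_gain N <= T_body (S N) y.
Proof.
  intros Hx Hf. unfold step_gain. set (rho := B / 5 ^ N).
  assert (Hr : 0 < rho) by (apply Rdiv_lt_0_compat; [lra | apply pow_lt; lra]).
  destruct (Rle_lt_dec rho (B - psum x N)) as [Hfree | Htight].
  - exists (upd x (S N) (fill rho)).
    destruct (fill_bounds rho Hr) as [Hfill _].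
    destruct (feasible_extend N x (fill rho) Hx Hf ltac:(lra)) as [Hsupp Hfeas].
    split; [exact Hsupp | split; [exact Hfeas |]].
    generalize (T_body_fill N x rho Hx Hr Hfree) (Rmin_l (fill_gain N rho) (transfer_gain N rho)).
    lra.
  - destruct (exists_heavy_entry N x Hf Htight) as [j0 [Hj0 [Ht Hu]]].
    fold rho in Ht. exists (transfer x j0 (S N) rho).
    destruct (feasible_transfer N j0 x rho Hx Hf Hj0 ltac:(lra)) as [Hsupp Hfeas].
    split; [exact Hsupp | split; [exact Hfeas |]].
    generalize (T_body_transfer N j0 x rho Hf Hx Hj0 Hr ltac:(lra) Hu)
      (Rmin_r (fill_gain N rho) (transfer_gain N rho)). lra.
Qed.

Lemma T_N_improve (N M : nat) : (1 <= N)%nat -> (N < M)%nat ->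
  exists d, 0 < d /\ forall xi, feasible B N xi ->
    exists xi', feasible B M xi' /\ T_N p gamma B w N xi + d <= T_N p gamma B w M xi'.
Proof.
  intros HN HM. exists (step_gain N). split; [apply step_gain_pos |].
  intros xi Hxi.
  destruct (T_body_improve N (pad N xi) (supported_pad N xi) (feasible_pad B N xi Hxi))
    as [y [Hy [Hfy Hgain]]].
  exists y. split; [apply (feasible_supported B (S N) M y); [lia | exact Hy | exact Hfy] |].
  unfold T_N. rewrite (pad_supported (S N) M y) by (auto; lia).
  rewrite !(T_inf_closed_form (S N)); [lra | lia | exact Hy | lia |].
  intros j Hj. apply supported_pad. lia.
Qed.

Lemma T_N_bounded (M : nat) : (1 <= M)%nat ->
  exists U, forall xi, feasible B M xi -> T_N p gamma B w M xi <= U.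
Proof.
  intros HM. exists (T_head + (psum coefA M + psum coefB M + INR w * coefA (S M)) * cap B).
  intros xi Hxi. unfold T_N. rewrite (T_inf_closed_form M) by (auto using supported_pad).
  apply Rplus_le_compat_l, T_body_le, feasible_pad, Hxi.
Qed.

End Throughput.

Theorem corollary2 (p gamma B : R) (w : nat) :
  0 < p < 1 -> 0 < gamma -> 0 < B -> (1 <= w)%nat ->
  forall N M : nat, (1 <= N)%nat -> (N < M)%nat ->
    Rbar_lt (T_N_star p gamma B w N) (T_N_star p gamma B w M).
Proof.
  intros Hp Hgamma HB Hw N M HN HNM.
  destruct (T_N_improve p gamma B w Hp Hgamma HB Hw N M HN HNM) as [d [Hd Himprove]].
  destruct (T_N_bounded p gamma B w Hp Hgamma Hw M ltac:(lia)) as [U HU].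
  apply (Lub_Rbar_lt _ _ d U (T_N p gamma B w M (fun _ => 0)) Hd).
  - exists (fun _ => 0). split; [| reflexivity].
    split; [intros; lra | rewrite psum_const_0; lra].
  - intros y [xi [Hxi ->]]. exact (HU xi Hxi).
  - intros y [xi [Hxi ->]]. destruct (Himprove xi Hxi) as [xi' [Hxi' Hle]].
    exists (T_N p gamma B w M xi').
    split; [exists xi'; split; [exact Hxi' | reflexivity] | exact Hle].
Qed.
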